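(* Let $H$ be a connected graph containing a triangle, let $u$ be a vertex of $H$, and let $M$ be a unicyclic graph with unique cycle $C$. Let $r\ge |V(H)|+3$ and let $U$ be the set of vertices of $M$ at distance exactly $r$ from $C$. Then there is a homomorphism from $M$ to $H$ that maps every vertex of $U$ to $u$.
   Context: Graphs are simple and loopless. A homomorphism from $M$ to $H$ is a map $h:V(M)\to V(H)$ sending every edge to an edge. A graph is unicyclic if it contains exactly one cycle. The distance from a vertex to a set of vertices is the minimum length of a path from the vertex to a vertex of the set. *)

From mathcomp Require Import all_boot.
Set Implicit Arguments. Unset Strict Implicit. Unset Printing Implicit Defensive.

Definition simple_graph (T : finType) (e : rel T) : Prop :=
  symmetric e /\ irreflexive e.

Definition connected_graph (T : finType) (e : rel T) : Prop :=
  forall x y : T, connect e x y.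

Definition has_triangle (T : finType) (e : rel T) : Prop :=
  exists a b c : T, [&& e a b, e b c & e c a].

Definition is_hom (T1 T2 : finType) (e1 : rel T1) (e2 : rel T2) (h : T1 -> T2) : Prop :=
  forall x y, e1 x y -> e2 (h x) (h y).

Definition is_cycle (T : finType) (e : rel T) (s : seq T) : bool :=
  [&& uniq s, 2 < size s & cycle e s].

Definition cycle_edge (T : finType) (s : seq T) (x y : T) : bool :=
  [&& x \in s, y \in s & (next s x == y) || (next s y == x)].

Definition same_cycle (T : finType) (s t : seq T) : Prop :=
  forall x y, cycle_edge s x y = cycle_edge t x y.

Definition unique_cycle (T : finType) (e : rel T) (C : seq T) : Prop :=
  is_cycle e C /\ forall t, is_cycle e t -> same_cycle C t.

Definition walk_to (T : finType) (e : rel T) (k : nat) (x : T) (A : pred T) : Prop :=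
  exists p : seq T, [/\ size p = k, path e x p & A (last x p)].

Definition dist_to_eq (T : finType) (e : rel T) (x : T) (A : pred T) (r : nat) : Prop :=
  walk_to e r x A /\ forall k, k < r -> ~ walk_to e k x A.

From mathcomp Require Import all_boot zify.
Set Implicit Arguments. Unset Strict Implicit. Unset Printing Implicit Defensive.

(* In M we measure the depth of a vertex: its distance to the set of anchors,
   i.e. the vertices of C together with one root in each component of M that
   misses C.  Two structural facts about depth hold because C is the only
   cycle of M:
   - an edge joining two vertices of equal depth is an edge of C;
   - a vertex off C has at most one neighbour of depth 0.
   In H, the triangle fixes the parity, so a walk from a of every length
   L >= |V(H)| + 1 ends at u; it extends to an infinite walk g with g 0 = a
   and g L = u.
   The homomorphism colours C properly with a, b, c, colours the other anchors
   a, colours each vertex of depth 1 by b or c avoiding its unique anchor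
   neighbour, and sends a vertex of depth k >= 2 to g (k - 2).  Since vertices
   at distance r from C have depth exactly r, they are sent to u. *)

Section Distance.
Variables (T : finType) (e : rel T) (A : pred T).
Hypotheses (esym : symmetric e) (reachA : forall v, exists k, walk_to e k v A).

(* Boolean form of [walk_to], so that the least length can be taken by [ex_minn]. *)
Definition walkb (k : nat) (v : T) : bool :=
  [exists t : k.-tuple T, path e v t && A (last v t)].

Lemma walkbP k v : reflect (walk_to e k v A) (walkb k v).
Proof.
apply: (iffP existsP) => [[t /andP[Hp HA]]|[p [Hs Hp HA]]].
  by exists (tval t); rewrite size_tuple.
have Hs' : size p == k by rewrite Hs.
by exists (Tuple Hs'); rewrite /= Hp HA.
Qed.

Lemma reachAb v : exists k, walkb k v.
Proof. by have [k /walkbP] := reachA v; exists k. Qed.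

Definition dist (v : T) : nat := ex_minn (reachAb v).

Lemma dist_le k v : walk_to e k v A -> dist v <= k.
Proof. by move/walkbP; rewrite /dist; case: ex_minnP => m _; apply. Qed.

Lemma dist_walk v : walk_to e (dist v) v A.
Proof. by rewrite /dist; case: ex_minnP => m /walkbP. Qed.

Lemma dist_edge x y : e x y -> dist y <= (dist x).+1.
Proof.
move=> exy; have [p [Hs Hp HA]] := dist_walk x.
by apply: dist_le; exists (x :: p); rewrite /= Hs esym exy.
Qed.

Lemma dist0 v : (dist v == 0) = A v.
Proof.
apply/idP/idP => [/eqP H|Av]; last by rewrite -leqn0 dist_le //; exists [::].
by have [p [Hs _ HA]] := dist_walk v; move: Hs HA; rewrite H; case: p.
Qed.

Lemma geodesic_descends p v : path e v p -> A (last v p) -> size p = dist v ->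
  path [rel z w | e z w && (dist z == (dist w).+1)] v p.
Proof.
elim: p v => [//|z p IH] v /= /andP[evz Hp] HA Hs.
have dz : dist z <= size p by apply: dist_le; exists p.
have dv : dist v <= (dist z).+1 by apply: dist_edge; rewrite esym.
have Ez : dist z = size p by apply/eqP; rewrite eqn_leq dz -ltnS Hs.
by rewrite evz -Hs Ez eqxx /= IH.
Qed.

End Distance.

Section Unicyclic.
Variables (T : finType) (e : rel T) (C : seq T).
Hypotheses (esym : symmetric e) (eirr : irreflexive e) (HC : unique_cycle e C).

Lemma connect_symmetric : connect_sym e.
Proof. exact: sym_connect_sym. Qed.

Definition del_edge (x y : T) : rel T :=
  [rel z w | e z w && ~~ (((z == x) && (w == y)) || ((z == y) && (w == x)))].

Lemma del_edge_sym x y : symmetric (del_edge x y).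
Proof.
move=> z w; rewrite /del_edge /= esym; congr (_ && ~~ _).
by rewrite orbC; congr (_ || _); rewrite andbC.
Qed.

Lemma connect_del_edge x y a b : connect (del_edge x y) a b -> connect e a b.
Proof. by apply: connect_sub => z w /andP[ezw _]; apply: connect1. Qed.

Lemma cycle_edge_sym x y : cycle_edge C x y = cycle_edge C y x.
Proof. by rewrite /cycle_edge andbCA orbC. Qed.

Lemma cycle_edge_mem x y : cycle_edge C x y -> (x \in C) && (y \in C).
Proof. by case/and3P => -> ->. Qed.

(* An edge that survives its own removal in the connectivity sense closes a
   cycle, which by uniqueness is [C]. *)
Lemma bypass_cycle_edge x y : e x y -> connect (del_edge x y) x y ->
  cycle_edge C x y.
Proof.
move=> exy /connectP[p0 Hp0 Hl0].
case: (shortenP Hp0) Hl0 => p Hp Hu _ Hl.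
have Hcyc : is_cycle e (x :: p).
  rewrite /is_cycle Hu /=.
  case: p Hp Hu Hl => [|z [|z' p]] Hp Hu /= Hl.
  - by move: exy; rewrite Hl eirr.
  - by move: Hp; rewrite -Hl /= /del_edge /= !eqxx andbF.
  - have Hpe : path e x [:: z, z' & p] by apply: sub_path Hp => ? ? /andP[].
    by rewrite rcons_path; move: Hpe => /= /and3P[-> -> ->]; rewrite -Hl esym.
have yp : y \in x :: p by rewrite Hl mem_last.
have Hnext : next (x :: p) y = x.
  by rewrite Hl next_nth mem_last (index_last Hu) nth_default.
by rewrite ((proj2 HC) _ Hcyc x y) /cycle_edge mem_head yp Hnext eqxx orbT.
Qed.

Lemma next_cycle_edge x y : e x y -> next C x == y -> cycle_edge C x y.
Proof.
move=> exy /eqP Hn; have xC : x \in C.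
  apply: contraTT exy => xC; move: Hn; rewrite next_nth (negbTE xC) => <-.
  by rewrite eirr.
by rewrite /cycle_edge xC -Hn mem_next xC eqxx.
Qed.

(* Removing an edge off the cycle keeps the cycle connected: go around it. *)
Lemma cycle_connected_without x y p q : p \in C -> q \in C ->
  ~~ cycle_edge C x y -> connect (del_edge x y) p q.
Proof.
move=> pC qC Hn.
have [uC cC] : uniq C /\ cycle e C by case: HC => /and3P[? _ ?].
case/rot_to: pC => i s Hrot.
pose cE := [rel z w | e z w && (next C z == w)].
have Hps : path cE p s.
  have : cycle cE (p :: s).
    by rewrite -Hrot cycle_relI !rot_cycle cC /= (cycle_next uC).
  by rewrite /= rcons_path => /andP[].
have qs : q \in p :: s by rewrite -Hrot mem_rot.
apply: (connect_sub (e := cE)); last exact: (path_connect Hps qs).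
move=> z w /andP[ezw Hzw]; apply: connect1; rewrite /del_edge /= ezw /=.
apply: contra Hn => /orP[] /andP[/eqP <- /eqP <-]; first exact: next_cycle_edge.
by rewrite cycle_edge_sym next_cycle_edge.
Qed.

Definition anchor : pred T := fun x =>
  (x \in C) || ((root e x == x) && [forall y, (y \in C) ==> ~~ connect e x y]).

(* Every vertex reaches an anchor: a vertex of [C] if its component meets [C],
   the root of its component otherwise. *)
Lemma anchor_reachable v : exists k, walk_to e k v anchor.
Proof.
case: (boolP [exists y, (y \in C) && connect e v y]).
  case/existsP => y /andP[yC /connectP[p Hp Hl]].
  by exists (size p), p; rewrite /anchor -Hl yC.
rewrite negb_exists => /forallP Hno.
have Hr := connect_root e v; case/connectP: (Hr) => p Hp Hl.
exists (size p), p; split => //; rewrite -Hl /anchor.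
rewrite (root_root connect_symmetric) eqxx /=; apply/orP; right.
apply/forallP => y; apply/implyP => yC; apply: contra (Hno y) => Hc.
by rewrite yC (connect_trans Hr Hc).
Qed.

Local Notation depth := (dist anchor_reachable).

Lemma anchors_connected_without x y p q : anchor p -> anchor q ->
  connect e p q -> ~~ cycle_edge C x y -> connect (del_edge x y) p q.
Proof.
move=> Ap Aq Hpq Hn.
case/orP: Ap => [pC|/andP[/eqP rp /forallP Hp]];
  case/orP: Aq => [qC|/andP[/eqP rq /forallP Hq]].
- exact: cycle_connected_without.
- by move: (Hq p); rewrite pC /= connect_symmetric Hpq.
- by move: (Hp q); rewrite qC /= Hpq.
- by move/(rootP connect_symmetric): Hpq; rewrite rp rq => ->; apply: connect0.
Qed.

Lemma anchored_cycle_edge x y p q : e x y -> anchor p -> anchor q ->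
  connect (del_edge x y) x p -> connect (del_edge x y) y q -> cycle_edge C x y.
Proof.
move=> exy Ap Aq Hxp Hyq.
have Hpq : connect e p q.
  apply: connect_trans (connect_trans _ (connect1 exy)) (connect_del_edge Hyq).
  by rewrite connect_symmetric (connect_del_edge Hxp).
case: (boolP (cycle_edge C x y)) (bypass_cycle_edge exy) => // Hn; apply.
apply: connect_trans Hxp (connect_trans (anchors_connected_without Ap Aq Hpq Hn) _).
by rewrite (sym_connect_sym (@del_edge_sym x y)).
Qed.

Lemma flat_edge_on_cycle x y : e x y -> depth x = depth y -> cycle_edge C x y.
Proof.
move=> exy Hd.
have [px [Hsx Hpx Hlx]] := dist_walk anchor_reachable x.
have [py [Hsy Hpy Hly]] := dist_walk anchor_reachable y.
have down : subrel [rel z w | e z w && (depth z == (depth w).+1)] (del_edge x y).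
  move=> z w /andP[ezw /eqP Hzw]; rewrite /del_edge /= ezw /=.
  by apply/negP => /orP[] /andP[/eqP zE /eqP wE];
    move: Hzw; rewrite zE wE Hd => /n_Sn.
apply: (anchored_cycle_edge exy Hlx Hly); apply/connectP;
  [exists px | exists py] => //; apply: (sub_path down);
  exact: geodesic_descends.
Qed.

Lemma unique_anchor_neighbour v w1 w2 : e v w1 -> e v w2 ->
  anchor w1 -> anchor w2 -> v \notin C -> w1 = w2.
Proof.
move=> e1 e2 A1 A2 vC; apply/eqP; apply: contraTT vC => Hne.
have Hvw : v != w1 by apply: contraTneq e1 => ->; rewrite eirr.
have H : cycle_edge C v w1.
  apply: (anchored_cycle_edge e1 A2 A1); last exact: connect0.
  apply: connect1; rewrite /del_edge /= e2 eqxx /= (negbTE Hvw) /= orbF.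
  by rewrite eq_sym.
by rewrite negbK; case/andP: (cycle_edge_mem H).
Qed.

Lemma depth_cycle x : x \in C -> depth x = 0.
Proof. by move=> xC; apply/eqP; rewrite dist0 /anchor xC. Qed.

Lemma depth_of_dist v r : dist_to_eq e v (fun x => x \in C) r -> depth v = r.
Proof.
move=> [[q [Hqs Hqp Hql]] Hmin].
have Hle : depth v <= r by apply: dist_le; exists q; rewrite /anchor Hql.
apply/eqP; rewrite eqn_leq Hle /= leqNgt; apply/negP => Hlt.
have [p [Hs Hp Hl]] := dist_walk anchor_reachable v.
case/orP: Hl => [HlC|/andP[_ /forallP /(_ (last v q))]].
  by apply: (Hmin _ Hlt); exists p.
rewrite Hql /= => /negP; apply.
have vp : connect e v (last v p) by apply/connectP; exists p.
have vq : connect e v (last v q) by apply/connectP; exists q.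
by apply: connect_trans vq; rewrite connect_symmetric.
Qed.

End Unicyclic.

Section TriangleWalks.
Variables (T : finType) (e : rel T) (a b c u : T).
Hypotheses (esym : symmetric e) (eab : e a b) (ebc : e b c) (eca : e c a)
  (Hau : connect e a u).

(* Going back and forth along [ab] lengthens a walk by any even amount. *)
Lemma pad_walk j q : path e a q -> last a q = u ->
  exists q', [/\ size q' = size q + j.*2, path e a q' & last a q' = u].
Proof.
move=> Hq Hl; elim: j => [|j [q' [Hs Hq' Hl']]]; first by exists q; rewrite addn0.
exists [:: b, a & q']; split => //=; first by rewrite Hs doubleS !addnS.
by rewrite eab esym eab Hq'.
Qed.

(* Going around the triangle fixes the parity: walks of every length
   [L >= |T| + 1] exist. *)
Lemma walk_of_length L : #|T| + 1 <= L ->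
  exists p, [/\ size p = L, path e a p & last a p = u].
Proof.
move=> HL; case/connectP: Hau => p0 Hp0 Hl0.
case: (shortenP Hp0) Hl0 => p Hp Hu _ Hl.
have Hsz : size p < #|T| by move/card_uniqP: Hu => /= <-; apply: max_card.
have Hle : size p + 2 <= L by apply: leq_trans HL; rewrite addn2 addn1 ltnS.
have HpL : size p <= L by apply: leq_trans Hle; apply: leq_addr.
have m2 : 2 <= L - size p by rewrite leq_subRL.
case Om: (odd (L - size p)).
- have m3 : 3 <= L - size p.
    by rewrite ltn_neqAle m2 andbT; apply: contraTneq Om => <-.
  have Hq : path e a [:: b, c, a & p] by rewrite /= eab ebc eca Hp.
  have [q [Hs Hq' Hlq]] := pad_walk ((L - size p) - 3)./2 Hq (Logic.eq_sym Hl).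
  exists q; split => //.
  by rewrite Hs halfK oddB // Om subn0 /= -addn3 -addnA subnKC // subnKC.
- have [q [Hs Hq Hlq]] := pad_walk (L - size p)./2 Hp (Logic.eq_sym Hl).
  by exists q; split => //; rewrite Hs halfK Om subn0 subnKC.
Qed.

(* An infinite walk from [a] that is at [u] at time [L]: follow a walk of
   length [L], then bounce on its last edge. *)
Lemma infinite_walk L : #|T| + 1 <= L ->
  exists g : nat -> T, [/\ g 0 = a, g L = u & forall k, e (g k) (g k.+1)].
Proof.
move=> HL; have [p [Hs Hp Hl]] := walk_of_length HL.
have L0 : 0 < L by apply: leq_trans HL; rewrite addn1.
have step j : j < L -> e (nth a (a :: p) j) (nth a (a :: p) j.+1).
  by move=> jL; move/pathP: Hp; apply; rewrite Hs.
have bounce : e (nth a (a :: p) L.-1) (nth a (a :: p) L).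
  by have := step L.-1; rewrite prednK //; apply.
pose idx k := if k <= L then k else L - odd (k - L).
have idx_tail k : L <= k -> idx k = L - odd (k - L).
  rewrite /idx leq_eqVlt => /orP[/eqP <-|Lk]; first by rewrite leqnn subnn subn0.
  by rewrite leqNgt Lk.
exists (fun k => nth a (a :: p) (idx k)); split.
- by [].
- by rewrite /idx leqnn -Hs -Hl; apply: (nth_last a (a :: p)).
- move=> k; case: (ltnP k L) => Hk; first by rewrite /idx (ltnW Hk) Hk; apply: step.
  rewrite !idx_tail ?(leqW Hk) // subSn //=.
  by case: (odd (k - L)); rewrite /= ?subn0 subn1 // esym.
Qed.

End TriangleWalks.

Lemma next_index (T : finType) (C : seq T) x : uniq C -> x \in C ->
  index (next C x) C = if (index x C).+1 == size C then 0 else (index x C).+1.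
Proof.
case: C => [//|z C'] Hu xC; rewrite next_nth xC.
have Hi : index x (z :: C') < (size C').+1 by rewrite -[(size C').+1]/(size (z :: C')) index_mem.
case: (ltnP (index x (z :: C')) (size C')) => Hlt.
  rewrite -[nth z C' _]/(nth z (z :: C') (index x (z :: C')).+1).
  rewrite index_uniq //= eqSS (ltn_eqF Hlt) //.
have -> : index x (z :: C') = size C' by apply/eqP; rewrite eqn_leq Hlt -ltnS Hi.
by rewrite nth_default //= !eqxx.
Qed.

Section CycleColouring.
Variables (TH TM : finType) (eH : rel TH) (a b c : TH) (C : seq TM).
Hypotheses (eHs : symmetric eH) (eab : eH a b) (ebc : eH b c) (eca : eH c a)
  (uC : uniq C) (sC : 2 < size C).

Definition chi (x : TM) : TH := let i := index x C in
  if i == (size C).-1 then c else if odd i then b else a.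

(* Consecutive vertices get colours [a b], [b a], [a c], [b c] or [c a]. *)
Lemma chi_next x : x \in C -> eH (chi x) (chi (next C x)).
Proof.
move=> xC; rewrite /chi (next_index uC xC).
have Hi : index x C < size C by rewrite index_mem.
case: ((index x C).+1 =P size C) => [Hn|Hn].
  rewrite -Hn /= eqxx.
  by have -> : (0 == index x C) = false by move: sC; rewrite -Hn; case: (index x C).
have Hne : (index x C == (size C).-1) = false.
  apply/negP => /eqP H; apply: Hn; rewrite H prednK //; exact: leq_ltn_trans Hi.
rewrite Hne.
case: ((index x C).+1 == (size C).-1); first by case: (odd _); rewrite // eHs.
by rewrite /=; case: (odd (index x C)); rewrite //= eHs.
Qed.

Lemma chi_edge x y : cycle_edge C x y -> eH (chi x) (chi y).
Proof.
case/and3P => xC yC /orP[/eqP <-|/eqP <-]; first exact: chi_next.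
by rewrite eHs; exact: chi_next.
Qed.

Lemma chi_triangle x : [|| chi x == a, chi x == b | chi x == c].
Proof. by rewrite /chi; case: ifP => _; last case: ifP => _; rewrite eqxx ?orbT. Qed.

End CycleColouring.

Section Homomorphism.
Variables (TH TM : finType) (eH : rel TH) (eM : rel TM) (C : seq TM)
  (a b c : TH) (g : nat -> TH).
Hypotheses (eHs : symmetric eH) (eab : eH a b) (ebc : eH b c) (eca : eH c a)
  (eMs : symmetric eM) (eMi : irreflexive eM) (HC : unique_cycle eM C)
  (g0 : g 0 = a) (gwalk : forall k, eH (g k) (g k.+1)).

Local Notation depth := (dist (anchor_reachable C eMs)).

Definition anchor_colour (w : TM) : TH := if w \in C then chi a b c C w else a.

(* A vertex of depth 1 avoids the colour of its unique anchor neighbour. *)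
Definition layer1_colour (v : TM) : TH :=
  if [exists w, eM v w && (depth w == 0) && (anchor_colour w == b)] then c else b.

Definition hom (v : TM) : TH :=
  if depth v == 0 then anchor_colour v
  else if depth v == 1 then layer1_colour v else g (depth v).-2.

Lemma anchor_colour_triangle w :
  [|| anchor_colour w == a, anchor_colour w == b | anchor_colour w == c].
Proof. by rewrite /anchor_colour; case: ifP => _; rewrite ?eqxx ?chi_triangle. Qed.

(* A vertex of depth 1 gets a colour adjacent to that of its anchor neighbour,
   which is unique because the vertex is off the cycle. *)
Lemma anchor_to_layer1 x y : eM x y -> depth x = 0 -> depth y = 1 ->
  eH (anchor_colour x) (layer1_colour y).
Proof.
move=> exy dx dy.
have yC : y \notin C by apply/negP => /(depth_cycle eMs); rewrite dy.
have Ax : anchor eM C x by rewrite -(dist0 (anchor_reachable C eMs)) dx.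
rewrite /layer1_colour; case: existsP => [[w /andP[/andP[eyw dw] /eqP wb]]|Hno].
  have Aw : anchor eM C w by rewrite -(dist0 (anchor_reachable C eMs)).
  have eyx : eM y x by rewrite eMs.
  by rewrite -(unique_anchor_neighbour eMs eMi HC eyw eyx Aw Ax yC) wb.
have xb : anchor_colour x != b.
  by apply/eqP => xb; apply: Hno; exists x; rewrite eMs exy dx xb !eqxx.
case/or3P: (anchor_colour_triangle x) => /eqP xE; rewrite xE //.
- by rewrite xE eqxx in xb.
- by rewrite eHs.
Qed.

Lemma hom_down x y : eM x y -> depth y = (depth x).+1 -> eH (hom x) (hom y).
Proof.
move=> exy dy; rewrite /hom dy; case Ed: (depth x) => [|[|n]] /=.
- by apply: anchor_to_layer1; rewrite // dy Ed.
- by rewrite g0 /layer1_colour; case: ifP; rewrite // eHs.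
- exact: gwalk.
Qed.

(* Edges inside one level lie on the cycle and are mapped by [chi]. *)
Lemma hom_flat x y : eM x y -> depth x = depth y -> eH (hom x) (hom y).
Proof.
move=> exy dxy; have Hxy := flat_edge_on_cycle eMi HC exy dxy.
have /andP[xC yC] := cycle_edge_mem Hxy.
have [uC sC _] : [/\ uniq C, 2 < size C & cycle eM C] by case: HC => /and3P.
rewrite /hom !(depth_cycle eMs) //= /anchor_colour xC yC.
exact: chi_edge.
Qed.

(* By 1-Lipschitzness of depth, every edge is flat or goes one level deeper. *)
Lemma hom_is_hom : is_hom eM eH hom.
Proof.
move=> x y exy; have eyx : eM y x by rewrite eMs.
have dy := dist_edge eMs (anchor_reachable C eMs) exy.
have dx := dist_edge eMs (anchor_reachable C eMs) eyx.
case: (ltngtP (depth x) (depth y)) => H.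
- by apply: hom_down exy _; apply/eqP; rewrite eqn_leq dy.
- by rewrite eHs; apply: hom_down eyx _; apply/eqP; rewrite eqn_leq dx.
- exact: hom_flat.
Qed.

Lemma hom_deep v k : depth v = k.+2 -> hom v = g k.
Proof. by move=> dv; rewrite /hom dv. Qed.

End Homomorphism.

Theorem lemma9 (TH TM : finType) (eH : rel TH) (eM : rel TM) (u : TH)
    (C : seq TM) (r : nat) :
  simple_graph eH -> connected_graph eH -> has_triangle eH ->
  simple_graph eM -> unique_cycle eM C ->
  #|TH| + 3 <= r ->
  exists h : TM -> TH,
    is_hom eM eH h /\
    (forall v : TM, dist_to_eq eM v (fun x => x \in C) r -> h v = u).
Proof.
move=> [eHs _] Hcon [a [b [c /and3P[eab ebc eca]]]] [eMs eMi] HC Hr.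
have HL : #|TH| + 1 <= r - 2 by lia.
have [g [g0 gu gwalk]] := infinite_walk eHs eab ebc eca (Hcon a u) HL.
exists (hom C a b c g eMs); split.
  exact: hom_is_hom eHs eab ebc eca eMs eMi HC g0 gwalk.
move=> v /(depth_of_dist eMs) dv; rewrite -gu; apply: hom_deep.
by rewrite dv; lia.
Qed.
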